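(* Let $n\ge2$ be even. The permutation representation of $S_n$ over $\mathbb{C}$ arising from the action of $S_n$ (by $\pi\cdot S=\pi(S)$) on the set of even-sized subsets of $\{1,\dots,n\}$ unites conjugacy classes; specifically, $\sigma=(1,2)(3,4)\cdots(n-1,n)$ and $\tau=(1)(2)(3,4)\cdots(n-1,n)$ are not conjugate in $S_n$ but have similar images.
   Context: A representation $T$ of $G$ unites conjugacy classes if there are non-conjugate $\sigma,\tau\in G$ with $T(\sigma),T(\tau)$ similar matrices. *)

From HB Require Import structures.
From mathcomp Require Import all_boot all_order all_algebra all_fingroup all_field.
Set Implicit Arguments. Unset Strict Implicit. Unset Printing Implicit Defensive.
Import GRing.Theory Num.Theory.
Local Open Scope ring_scope.

(* Points are 'I_n = {0,..,n-1}; paper's point k corresponds to ordinal k-1. *)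

Definition even_subsets (n : nat) : {set {set 'I_n}} :=
  [set A : {set 'I_n} | ~~ odd #|A|].

(* Permutation representation of S_n over C (algC) on the even-sized subsets:
   basis vector e_S (S even-sized, enumerated via enum_val) is sent to
   e_{pi(S)}, i.e. entry (i,j) is 1 iff S_i = pi(S_j). *)
Definition even_subset_rep (n : nat) (pi : {perm 'I_n})
  : 'M[algC]_(#|even_subsets n|) :=
  \matrix_(i, j) ((pi @: (enum_val j : {set 'I_n}) == enum_val i)%:R).

Definition unites_classes (n m : nat) (T : {perm 'I_n} -> 'M[algC]_m) : Prop :=
  exists sigma tau : {perm 'I_n},
    sigma \notin (tau ^: [set: {perm 'I_n}])%g /\ similar_in unitmx (T sigma) (T tau).

(* swap 2k <-> 2k+1 (0-indexed), i.e. (1,2)(3,4)... in 1-indexed notation;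
   an unpaired last point (n odd) is fixed. *)
Definition pairswap_fun (n : nat) (i : 'I_n) : 'I_n :=
  insubd i (if odd i then i.-1 else i.+1).

Lemma pairswap_funK n : involutive (@pairswap_fun n).
Proof.
move=> i; apply: val_inj; rewrite /pairswap_fun.
set j := insubd i _.
have Ej : (j : nat) = if ((if odd i then i.-1 else i.+1) < n)%N
                  then (if odd i then i.-1 else i.+1) else val i.
  by rewrite /j val_insubd.
rewrite val_insubd !Ej.
have lti := ltn_ord i.
case Oi: (odd i).
- have i0 : (0 < i)%N by case: (nat_of_ord i) Oi.
  have Oi' : odd i.-1 = false by move: Oi; rewrite -{1}(prednK i0) /= => /negbTE.
  have lt1 : (i.-1 < n)%N by apply: leq_ltn_trans (leq_pred i) lti.
  by rewrite lt1 Oi' (prednK i0) lti.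
- case: (ltnP i.+1 n) => H.
  + by rewrite /= Oi /= lti.
  + have -> : odd (val i) = false by exact: Oi.
    have -> : ((val i).+1 < n)%N = false by rewrite ltnNge H.
    by rewrite /j val_insubd Oi ltnNge H.
Qed.

Definition sigma_pairs (n : nat) : {perm 'I_n} := perm (can_inj (@pairswap_funK n)).

Definition tau_fun (n : nat) (i : 'I_n) : 'I_n :=
  if (i < 2)%N then i else pairswap_fun i.

Lemma tau_funK n : involutive (@tau_fun n).
Proof.
move=> i; rewrite /tau_fun; case Hi: (i < 2)%N; first by rewrite Hi.
have Hj : (pairswap_fun i < 2)%N = false.
  rewrite /pairswap_fun val_insubd.
  move: Hi; case: ifP => _; last by [].
  move: (nat_of_ord i) => k.
  by case: k => [|[|[|k]]] //=; case: (odd k).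
by rewrite Hj pairswap_funK.
Qed.

Definition tau_pairs (n : nat) : {perm 'I_n} := perm (can_inj (@tau_funK n)).

From HB Require Import structures.
From mathcomp Require Import all_boot all_order all_algebra all_fingroup all_field.
From mathcomp Require Import zify.
Set Implicit Arguments. Unset Strict Implicit. Unset Printing Implicit Defensive.
Import GRing.Theory Num.Theory.
Local Open Scope ring_scope.

(* With t = (0 1) we have tau = t sigma = sigma t, and both act on the even subsets S of
   {0, ..., n-1}.  When S meets {0, 1} in 0 or 2 points, t fixes S and sigma S = tau S.
   Otherwise S, being even, has odd intersection with exactly one of the sets of even and
   of odd points >= 2, and sigma exchanges these two sets.  So applying t to exactly those S
   that meet {0, 1} once and the even points >= 2 an odd number of times is an involution of
   the even subsets conjugating the action of sigma into that of tau: the permutation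
   matrices are similar.  They are not conjugate, since tau fixes 0 and sigma has no fixed
   point. *)

Section ActionMatrix.
Variables (F : fieldType) (T : finType) (D : {set T}).

Definition action_mx (f : T -> T) : 'M[F]_#|D| :=
  \matrix_(i, j) ((f (enum_val j) == enum_val i)%:R).

Lemma action_mxM f g : {in D, forall x, f x \in D} ->
  action_mx g *m action_mx f = action_mx (g \o f).
Proof.
move=> Df; apply/matrixP => i k; rewrite !mxE.
have Dfk : f (enum_val k) \in D by rewrite Df ?enum_valP.
rewrite (bigD1 (enum_rank_in Dfk (f (enum_val k)))) //= !mxE.
rewrite enum_rankK_in // eqxx mulr1 big1 ?addr0 // => j /eqP ne_j; rewrite !mxE.
have [fk_j|] := eqVneq (f (enum_val k)) (enum_val j); last by rewrite mulr0.
by case: ne_j; apply: enum_val_inj; rewrite enum_rankK_in.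
Qed.

Lemma eq_in_action_mx f g : {in D, f =1 g} -> action_mx f = action_mx g.
Proof. by move=> eq_fg; apply/matrixP => i j; rewrite !mxE eq_fg ?enum_valP. Qed.

Lemma action_mx_id : action_mx id = 1%:M.
Proof. by apply/matrixP => i j; rewrite !mxE /= (inj_eq enum_val_inj) eq_sym. Qed.

Lemma similar_action_mx s t f :
    {in D, forall x, s x \in D} -> {in D, forall x, f x \in D} ->
    {in D, involutive f} -> {in D, forall x, f (s x) = t (f x)} ->
  similar_in unitmx (action_mx s) (action_mx t).
Proof.
move=> Ds Df fK fs_tf.
have ffE : action_mx f *m action_mx f = 1%:M.
  by rewrite action_mxM // -action_mx_id; apply: eq_in_action_mx.
have [f_unit _] := mulmx1_unit ffE.
have intertwine : action_mx f *m action_mx s = action_mx t *m action_mx f.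
  by rewrite !action_mxM //; apply: eq_in_action_mx => x Dx /=; rewrite fs_tf.
exists (action_mx f) => //.
by rewrite /similar_to /conjmx /= pinvmxE // intertwine mulmxK.
Qed.

End ActionMatrix.

Lemma card_imsetI_perm (T : finType) (p : {perm T}) (A B : {set T}) :
  #|(p @: A) :&: (p @: B)| = #|A :&: B|.
Proof. by rewrite -imsetI ?card_imset //; [exact: perm_inj | exact: in2W perm_inj]. Qed.

Lemma imset_involutive (T : finType) (p : {perm T}) :
  involutive p -> involutive (fun A : {set T} => p @: A).
Proof. by move=> pK A; rewrite -imset_comp (eq_imset _ pK) imset_id. Qed.

Lemma imset_tperm_id (T : finType) (x y : T) (A : {set T}) :
  (x \in A) = (y \in A) -> tperm x y @: A = A.
Proof.
move=> xA_yA; apply/setP => z; rewrite -[in LHS](tpermK x y z) mem_imset; last exact: perm_inj.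
by case: tpermP => [->|->|]; rewrite ?xA_yA.
Qed.

Lemma fixed_point_free_notin_class (T : finType) (s t : {perm T}) (x : T) :
  t x = x -> (forall y, s y != y) -> s \notin (t ^: [set: {perm T}])%g.
Proof.
move=> tx s_free; apply/imsetP => -[g _ s_tg].
by have /eqP[] := s_free (g x); rewrite s_tg conjgE !permM permK tx.
Qed.

Lemma mem_imset_involutive (T : finType) (p : {perm T}) :
  involutive p -> forall (A : {set T}) y, (y \in p @: A) = (p y \in A).
Proof. by move=> pK A y; rewrite -{1}(pK y) mem_imset //; apply: perm_inj. Qed.

Lemma card_setI_pair (T : finType) (A : {set T}) (a b : T) :
  a != b -> #|A :&: [set a; b]| = ((a \in A) + (b \in A))%N.
Proof.
move=> ab; have -> : #|A :&: [set a; b]| = (\sum_(x in [set a; b]) (x \in A))%N.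
  rewrite -sum1_card big_mkcond [RHS]big_mkcond; apply: eq_bigr => x _.
  by rewrite inE andbC; case: (x \in _); case: (x \in A).
by rewrite big_setU1 ?big_set1 ?inE.
Qed.

Lemma imset_even_subsets n (p : {perm 'I_n}) (S : {set 'I_n}) :
  S \in even_subsets n -> p @: S \in even_subsets n.
Proof. by rewrite !inE card_imset //; apply: perm_inj. Qed.

Section PairSwaps.
Variable m : nat.
Hypothesis m_even : ~~ odd m.
Local Notation n := m.+2.
Local Notation sigma := (sigma_pairs n).
Local Notation tau := (tau_pairs n).

Let o0 : 'I_n := ord0.
Let o1 : 'I_n := Ordinal (isT : 1 < n)%N.
Local Notation t01 := (tperm o0 o1).

Definition head : {set 'I_n} := [set x : 'I_n | x < 2]%N.
Definition tail_even : {set 'I_n} := [set x : 'I_n | ~~ odd x & 2 <= x]%N.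
Definition tail_odd : {set 'I_n} := [set x : 'I_n | odd x & 2 <= x]%N.

Lemma val_sigma_pairs (i : 'I_n) : val (sigma i) = if odd i then i.-1 else i.+1.
Proof.
rewrite permE /pairswap_fun val_insubd; have [odd_i|even_i] := boolP (odd i).
  by rewrite (leq_ltn_trans (leq_pred _) (ltn_ord i)).
suff -> : (i.+1 < n)%N by [].
rewrite ltn_neqAle ltn_ord andbT; apply/eqP => /(congr1 odd) /=.
by rewrite (negbTE even_i) negbK (negbTE m_even).
Qed.

Lemma sigma_pairsK : involutive sigma.
Proof. by move=> i; rewrite !permE pairswap_funK. Qed.

Lemma tau_pairsE : tau = (t01 * sigma)%g.
Proof.
apply/permP => i; rewrite permM [tau _]permE /tau_fun.
case: tpermP => [->|->|]; try by apply: val_inj; rewrite val_sigma_pairs.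
case: i => [[|[|k]] lt_k] ne0 ne1; [case: ne0 | case: ne1 | by rewrite permE].
all: exact: val_inj.
Qed.

Lemma tperm_sigma_pairsC : commute t01 sigma.
Proof.
have sigma01 : sigma o0 = o1 by apply: val_inj; rewrite val_sigma_pairs.
have sigma10 : sigma o1 = o0 by apply: val_inj; rewrite val_sigma_pairs.
by apply/commgP/conjg_fixP; rewrite tpermJ sigma01 sigma10 tpermC.
Qed.

Lemma imset_tau_pairs (S : {set 'I_n}) : tau @: S = sigma @: (t01 @: S).
Proof. by rewrite tau_pairsE -imset_comp; apply: eq_imset => x; rewrite permM. Qed.

Lemma imset_tperm_sigma_pairs (S : {set 'I_n}) :
  t01 @: (sigma @: S) = sigma @: (t01 @: S).
Proof.
by rewrite -!imset_comp; apply: eq_imset => x /=; rewrite -!permM tperm_sigma_pairsC.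
Qed.

Lemma head_pair : head = [set o0; o1].
Proof. by apply/setP => -[[|[|k]] lt_k]; rewrite !inE -?val_eqE. Qed.

Lemma sigma_pairs_head : sigma @: head = head.
Proof.
apply/setP => y; rewrite (mem_imset_involutive sigma_pairsK) !inE val_sigma_pairs.
by case: y => [[|[|[|k]]] lt_k] //=; case: ifP.
Qed.

Lemma sigma_pairs_tail_odd : sigma @: tail_odd = tail_even.
Proof.
apply/setP => y; rewrite (mem_imset_involutive sigma_pairsK) !inE val_sigma_pairs.
by case: y => [[|[|k]] lt_k] //=; rewrite !negbK; case: ifP => /= ->.
Qed.

Lemma tperm_head : t01 @: head = head.
Proof. by apply: imset_tperm_id; rewrite !inE. Qed.

Lemma tperm_tail_even : t01 @: tail_even = tail_even.
Proof. by apply: imset_tperm_id; rewrite !inE. Qed.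

Lemma card_head_tail (S : {set 'I_n}) :
  #|S| = (#|S :&: head| + #|S :&: tail_even| + #|S :&: tail_odd|)%N.
Proof.
rewrite -(cardsID head S) -(cardsID tail_even (S :\: head)) addnA.
congr (_ + _ + _)%N; apply: eq_card => x; rewrite /head /tail_even /tail_odd !inE.
all: by case: (x \in S); case: (odd x); case: (ltnP x 2).
Qed.

Definition odd_head (S : {set 'I_n}) := odd #|S :&: head|.
Definition odd_tail_even (S : {set 'I_n}) := odd #|S :&: tail_even|.

Lemma odd_head_sigma_pairs (S : {set 'I_n}) : odd_head (sigma @: S) = odd_head S.
Proof. by rewrite /odd_head -[in LHS]sigma_pairs_head card_imsetI_perm. Qed.

Lemma odd_head_tperm (S : {set 'I_n}) : odd_head (t01 @: S) = odd_head S.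
Proof. by rewrite /odd_head -[in LHS]tperm_head card_imsetI_perm. Qed.

Lemma odd_tail_even_tperm (S : {set 'I_n}) : odd_tail_even (t01 @: S) = odd_tail_even S.
Proof. by rewrite /odd_tail_even -[in LHS]tperm_tail_even card_imsetI_perm. Qed.

Lemma odd_tail_even_sigma_pairs (S : {set 'I_n}) :
  S \in even_subsets n -> odd_head S -> odd_tail_even (sigma @: S) = ~~ odd_tail_even S.
Proof.
rewrite /odd_tail_even -{1}sigma_pairs_tail_odd card_imsetI_perm inE (card_head_tail S).
rewrite /odd_head !oddD => even_S odd_hS; move: even_S; rewrite odd_hS.
by case: odd; case: odd.
Qed.

Lemma imset_tperm_even_head (S : {set 'I_n}) : ~~ odd_head S -> t01 @: S = S.
Proof.
rewrite /odd_head head_pair card_setI_pair -?val_eqE // => even_hS.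
by apply: imset_tperm_id; move: even_hS; case: (o0 \in S); case: (o1 \in S).
Qed.

Definition intertwiner (S : {set 'I_n}) :=
  if odd_head S && odd_tail_even S then t01 @: S else S.

Lemma intertwinerK : involutive intertwiner.
Proof.
move=> S; rewrite /intertwiner; case odd_S: (odd_head S && odd_tail_even S); rewrite ?odd_S //.
by rewrite odd_head_tperm odd_tail_even_tperm odd_S (imset_involutive (tpermK _ _)).
Qed.

Lemma intertwiner_sigma_tau (S : {set 'I_n}) : S \in even_subsets n ->
  intertwiner (sigma @: S) = tau @: intertwiner S.
Proof.
move=> even_S; rewrite /intertwiner odd_head_sigma_pairs imset_tau_pairs.
have [odd_hS|even_hS] := boolP (odd_head S); last by rewrite /= imset_tperm_even_head.
rewrite odd_tail_even_sigma_pairs //=; case: (odd_tail_even S) => /=.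
  by rewrite (imset_involutive (tpermK _ _)).
by rewrite imset_tperm_sigma_pairs.
Qed.

Lemma similar_even_subset_rep_pairs :
  similar_in unitmx (even_subset_rep sigma) (even_subset_rep tau).
Proof.
apply: (@similar_action_mx _ _ (even_subsets n) (fun S => sigma @: S)
  (fun S => tau @: S) intertwiner) => S even_S.
- exact: imset_even_subsets.
- by rewrite /intertwiner; case: ifP => // _; apply: imset_even_subsets.
- exact: intertwinerK.
- exact: intertwiner_sigma_tau.
Qed.

Lemma sigma_pairs_notin_class_tau : sigma \notin (tau ^: [set: {perm 'I_n}])%g.
Proof.
apply: (@fixed_point_free_notin_class _ _ _ o0).
  by apply: val_inj; rewrite permE.
move=> y; apply/eqP => /(congr1 val); rewrite val_sigma_pairs.
by case: y => [[|k] lt_k] /=; [lia | case: (odd k) => /=; lia].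
Qed.

End PairSwaps.

Theorem mainTheorem15 (n : nat) (n_ge2 : (2 <= n)%N) (n_even : ~~ odd n) :
  unites_classes (@even_subset_rep n) /\
  (sigma_pairs n \notin (tau_pairs n ^: [set: {perm 'I_n}])%g /\
   similar_in unitmx (even_subset_rep (sigma_pairs n))
                     (even_subset_rep (tau_pairs n))).
Proof.
case: n n_ge2 n_even => [|[|m]] // _ m_even.
rewrite /= negbK in m_even.
have not_conj := sigma_pairs_notin_class_tau m_even.
have similar := similar_even_subset_rep_pairs m_even.
split; last by split.
by exists (sigma_pairs m.+2), (tau_pairs m.+2).
Qed.
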